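(* Let $q=p_1\otimes\cdots\otimes p_k\in B_{\lambda_1}\otimes\cdots\otimes B_{\lambda_k}$ and $1\le i\le n+1$. Let $l\ge\lambda_1+\cdots+\lambda_k$ be large enough that $T_l(q)=T_\infty(q)$, put $v_0=u_l$ and define $v_j$ recursively by $v_{j-1}\otimes p_j\simeq p'_j\otimes v_j$. Then $$\rho_i(q)-\rho_i(T_\infty(q))=\sum_{j=1}^k Q_i(v_{j-1}\otimes p_j).$$
   Context: Fix $n\ge1$. For $l\ge1$ let $B_l=\{x=(x_1,\dots,x_{n+1})\in\mathbb Z_{\ge0}^{n+1}: \sum_i x_i=l\}$ and $u_l=(l,0,\dots,0)\in B_l$. Indices of $x$ are read modulo $n+1$. For $x\in B_l,y\in B_m$ and $i\in\mathbb Z$ put $Q_i(x\otimes y)=\min_{1\le k\le n+1}\big(\sum_{j=1}^{k-1}x_{i+j}+\sum_{j=k+1}^{n+1}y_{i+j}\big)$ (so $Q_{n+1}=Q_0$) and $H(x\otimes y)=\min(l,m)-Q_0(x\otimes y)$. The combinatorial $R$ is the map $B_l\otimes B_m\to B_m\otimes B_l$, $x\otimes y\mapsto\tilde y\otimes\tilde x$, $\tilde x_i=x_i+Q_i-Q_{i-1}$, $\tilde y_i=y_i+Q_{i-1}-Q_i$ ($Q_j=Q_j(x\otimes y)$); write $x\otimes y\simeq\tilde y\otimes\tilde x$, and extend $\simeq$ to tensor products by applying $R$ to adjacent factors. Box-ball system: a state is $p=p_1\otimes\cdots\otimes p_L\in B_{\lambda_1}\otimes\cdots\otimes B_{\lambda_L}$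 ($\lambda_j\ge1$). For $l\ge1$ let $v_0=u_l$ and recursively $v_{j-1}\otimes p_j\simeq p'_j\otimes v_j$ ($1\le j\le L$); then $T_l(p)=p'_1\otimes\cdots\otimes p'_L$. For all sufficiently large $l$, $T_l(p)$ is independent of $l$; this is $T_\infty(p)$. Writing $T_\infty^t(p)=p^t_1\otimes\cdots\otimes p^t_L$, $p^t_j=(x^t_{j,1},\dots,x^t_{j,n+1})$, define for $0\le k\le L$, $1\le d\le n+1$: $\rho_{k,d}(p)=\sum_{j=1}^k(x^0_{j,2}+\cdots+x^0_{j,d})+\sum_{t\ge1}\sum_{j=1}^k(x^t_{j,2}+\cdots+x^t_{j,n+1})$ (a finite sum), and $\rho_{k,0}(p)=\rho_{k,n+1}(p)-(\lambda_1+\cdots+\lambda_k)$. For a state $q$ of length $k$ write $\rho_d(q)=\rho_{k,d}(q)$. *)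

From Stdlib Require Import ClassicalEpsilon.
From mathcomp Require Import all_boot all_order all_algebra.
Set Implicit Arguments. Unset Strict Implicit. Unset Printing Implicit Defensive.

(* An element x of B_l (for fixed n) is a seq nat of size n+1 with sumn x = l.
   Components are 1-based and read modulo n+1:  comp n x m = x_m. *)
Definition comp (n : nat) (x : seq nat) (m : nat) : nat :=
  nth 0 x ((m + n) %% n.+1).

Definition inB (n l : nat) (x : seq nat) : bool := (size x == n.+1) && (sumn x == l).

Definition u_ (n l : nat) : seq nat := l :: nseq n 0.

Definition Qterm (n i : nat) (x y : seq nat) (k : nat) : nat :=
  \sum_(1 <= j < k) comp n x (i + j) + \sum_(k.+1 <= j < n.+2) comp n y (i + j).

Definition Q (n i : nat) (x y : seq nat) : nat :=
  foldr minn (Qterm n i x y 1) [seq Qterm n i x y k | k <- iota 2 n].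

Definition H (n : nat) (x y : seq nat) : nat := minn (sumn x) (sumn y) - Q n 0 x y.

(* combinatorial R : x (x) y |-> ty (x) tx, returned as the pair (ty, tx).
   tx_i = x_i + Q_i - Q_{i-1},  ty_i = y_i + Q_{i-1} - Q_i  (these are >= 0). *)
Definition Rtil (n : nat) (x y : seq nat) : seq nat * seq nat :=
  ([seq (comp n y i + Q n i.-1 x y - Q n i x y)%N | i <- iota 1 n.+1],
   [seq (comp n x i + Q n i x y - Q n i.-1 x y)%N | i <- iota 1 n.+1]).

Fixpoint Tstep (n : nat) (v : seq nat) (p : seq (seq nat)) : seq (seq nat) * seq nat :=
  match p with
  | [::] => ([::], v)
  | pj :: p' => let r := Rtil n v pj in
                let rest := Tstep n r.2 p' in (r.1 :: rest.1, rest.2)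
  end.

Definition T (n l : nat) (p : seq (seq nat)) : seq (seq nat) := (Tstep n (u_ n l) p).1.

Fixpoint carriers_from (n : nat) (v : seq nat) (p : seq (seq nat)) : seq (seq nat) :=
  match p with
  | [::] => [:: v]
  | pj :: p' => v :: carriers_from n (Rtil n v pj).2 p'
  end.

Definition carriers (n l : nat) (p : seq (seq nat)) := carriers_from n (u_ n l) p.

(* T_infinity(p): the value of T_l(p) for all sufficiently large l
   (chosen by classical description; it exists by the paper's remark). *)
Definition Tinf (n : nat) (p : seq (seq nat)) : seq (seq nat) :=
  epsilon (inhabits p) (fun r => exists L, forall l, L <= l -> T n l p = r).

Definition is_state (n : nat) (p : seq (seq nat)) : bool :=
  all (fun x => (size x == n.+1) && (0 < sumn x)) p.

Definition colsum (n d : nat) (p : seq (seq nat)) : nat :=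
  \sum_(x <- p) \sum_(2 <= c < d.+1) comp n x c.

(* the finite sum  sum_{t>=1} colsum_{n+1}(T_inf^t p): value of the eventually
   constant partial sums (the terms are eventually 0). *)
Definition partial_tail (n : nat) (p : seq (seq nat)) (N : nat) : nat :=
  \sum_(1 <= t < N.+1) colsum n n.+1 (iter t (Tinf n) p).

Definition tailsum (n : nat) (p : seq (seq nat)) : nat :=
  epsilon (inhabits 0) (fun s => exists N, forall M, N <= M -> partial_tail n p M = s).

(* rho_d(q) = rho_{k,d}(q) with k = length of q, for 1 <= d <= n+1 *)
Definition rho (n d : nat) (p : seq (seq nat)) : nat := colsum n d p + tailsum n p.

(* Write x~ (x) y~ for R(x (x) y), and call the colours 2..n+1 balls (colour 1 is a vacancy).
   R obeys the local laws y~_c + Q_c = y_c + Q_(c-1) and x~_c + Q_(c-1) = x_c + Q_c, which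
   telescope over the colours 2..d.  When the carrier x has at least as many vacancies as y
   has balls, Q_0 is the number of balls of y; then at every site the balls of p_j of colours
   2..i plus all balls of p'_j equal the balls of p'_j of colours 2..i plus Q_i(v_(j-1) (x) p_j).
   Summing over the sites gives the claim, since the tail of rho_i(q) is the ball count of
   T_oo(q) plus the tail of T_oo(q).  This tail is a genuine finite sum because the potential
   sum_j (L - j + 1) #balls(p_j) strictly decreases under T_oo while balls remain; and T_l
   equals T_oo as soon as l exceeds the total box size, because Q never sees the surplus
   vacancies of the carrier. *)

From Pilot Require Import Defs.
From Stdlib Require Import ClassicalEpsilon.
From mathcomp Require Import all_boot all_order all_algebra.
From mathcomp Require Import zify.
Import GRing.Theory Num.Theory.

(* Otherwise [comp] would be function composition from ssrfun. *)
Local Notation comp := Defs.comp.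

(** * Cyclic components and the minimum [Q] *)

Lemma comp_addn_period n x m : comp n x (m + n.+1) = comp n x m.
Proof. by rewrite /comp -addnA (addnC n.+1) addnA modnDr. Qed.

Lemma comp_wrap n x i : comp n x (i + n.+2) = comp n x i.+1.
Proof. by rewrite addnS -addSn comp_addn_period. Qed.

Lemma comp1 n x : comp n x 1 = nth 0 x 0.
Proof. by rewrite /comp add1n modnn. Qed.

Lemma compS n x c : c < n.+1 -> comp n x c.+1 = nth 0 x c.
Proof. by move=> lt_cn; rewrite /comp addSn -addnS modnDr modn_small. Qed.

Lemma foldr_minn_le_head (a : nat) s : foldr minn a s <= a.
Proof. by elim: s => //= z s IH; rewrite geq_min IH orbT. Qed.

Lemma foldr_minn_le_mem (a : nat) s z : z \in s -> foldr minn a s <= z.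
Proof.
elim: s => //= w s IH; rewrite in_cons geq_min => /orP[/eqP->|/IH->].
  by rewrite leqnn.
by rewrite orbT.
Qed.

Lemma foldr_minn_mem (a : nat) s : foldr minn a s \in a :: s.
Proof.
elim: s => [|w s IH] /=; first by rewrite mem_seq1.
rewrite /minn; case: ltnP => _; first by rewrite !in_cons eqxx orbT.
by move: IH; rewrite !in_cons => /orP[->|->]; rewrite ?orbT.
Qed.

Lemma Q_le_Qterm n i x y k : 1 <= k <= n.+1 -> Q n i x y <= Qterm n i x y k.
Proof.
rewrite /Q; case: k => [//|[_|k /andP[_ le_kn]]]; first exact: foldr_minn_le_head.
by apply/foldr_minn_le_mem/map_f; rewrite mem_iota; lia.
Qed.

Lemma Q_attained n i x y : exists2 k, 1 <= k <= n.+1 & Q n i x y = Qterm n i x y k.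
Proof.
rewrite /Q; have := foldr_minn_mem (Qterm n i x y 1) [seq Qterm n i x y k | k <- iota 2 n].
rewrite in_cons => /orP[/eqP->|/mapP[k]]; first by exists 1.
by rewrite mem_iota => k_in ->; exists k => //; lia.
Qed.

Lemma leq_sum_nat_interval (F : nat -> nat) a b a' b' : a' <= a -> b <= b' ->
  \sum_(a <= j < b) F j <= \sum_(a' <= j < b') F j.
Proof. by move=> le_a le_b; apply: (le_big_nat leqnn (fun m k => leq_addr k m)). Qed.

Lemma sum_offsetS (F : nat -> nat) i a b :
  \sum_(a.+1 <= j < b.+1) F (i + j) = \sum_(a <= j < b) F (i.+1 + j).
Proof. by rewrite big_add1 /=; apply: eq_big_nat => j _; rewrite addnS addSn. Qed.

Lemma Qterm_shift n i x y k : 1 <= k <= n ->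
  Qterm n i x y k.+1 + comp n y i.+1 = comp n x i.+1 + Qterm n i.+1 x y k.
Proof.
move=> /andP[k_gt0 le_kn].
rewrite /Qterm big_ltn // (sum_offsetS (comp n x) i 1 k) addn1.
rewrite -(sum_offsetS (comp n y) i k.+1 n.+2) (big_nat_recr n.+2 k.+2) //= comp_wrap; lia.
Qed.

Lemma Qterm_first n i x y : Qterm n i x y 1 = \sum_(2 <= j < n.+2) comp n y (i + j).
Proof. by rewrite /Qterm big_geq. Qed.

Lemma Qterm_last n i x y : Qterm n i x y n.+1 = \sum_(1 <= j < n.+1) comp n x (i + j).
Proof. by rewrite /Qterm [X in _ + X]big_geq ?addn0. Qed.

Lemma Qterm_first_shift n i x y : Qterm n i.+1 x y 1 <= comp n y i.+1 + Qterm n i x y 1.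
Proof.
rewrite !Qterm_first -(sum_offsetS (comp n y) i 2 n.+2).
apply: (@leq_trans (\sum_(2 <= j < n.+3) comp n y (i + j))).
  exact: leq_sum_nat_interval.
by rewrite big_nat_recr //= comp_wrap addnC.
Qed.

Lemma Qterm_last_shift n i x y :
  Qterm n i x y n.+1 <= comp n x i.+1 + Qterm n i.+1 x y n.+1.
Proof.
rewrite !Qterm_last -(sum_offsetS (comp n x) i 1 n.+1).
apply: (@leq_trans (\sum_(1 <= j < n.+2) comp n x (i + j))).
  exact: leq_sum_nat_interval.
by rewrite big_ltn // addn1.
Qed.

(** * Local conservation laws of [R] *)

(* These two bounds make the truncated subtractions in [Rtil] exact. *)
Lemma Q_le_compx_QS n i x y : Q n i x y <= comp n x i.+1 + Q n i.+1 x y.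
Proof.
have [k /andP[k_gt0 le_kn] ->] := Q_attained n i.+1 x y.
have [lt_kn|le_nk] := ltnP k n.+1.
  have := Qterm_shift n i x y k; have := Q_le_Qterm n i x y k.+1; lia.
have -> : k = n.+1 by lia.
have := Qterm_last_shift n i x y; have := Q_le_Qterm n i x y n.+1; lia.
Qed.

Lemma QS_le_compy_Q n i x y : Q n i.+1 x y <= comp n y i.+1 + Q n i x y.
Proof.
have [[|[|k]] // /andP[_ le_kn] ->] := Q_attained n i x y.
  have := Qterm_first_shift n i x y; have := Q_le_Qterm n i.+1 x y 1; lia.
have := Qterm_shift n i x y k.+1; have := Q_le_Qterm n i.+1 x y k.+1; lia.
Qed.

Lemma Rtil1_comp n x y c : 1 <= c <= n.+1 ->
  comp n (Rtil n x y).1 c + Q n c x y = comp n y c + Q n c.-1 x y.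
Proof.
case: c => [//|c] /andP[_ lt_cn].
rewrite compS // (nth_map 0) ?size_iota // nth_iota // add1n /=.
have := QS_le_compy_Q n c x y; lia.
Qed.

Lemma Rtil2_comp n x y c : 1 <= c <= n.+1 ->
  comp n (Rtil n x y).2 c + Q n c.-1 x y = comp n x c + Q n c x y.
Proof.
case: c => [//|c] /andP[_ lt_cn].
rewrite compS // (nth_map 0) ?size_iota // nth_iota // add1n /=.
have := Q_le_compx_QS n c x y; lia.
Qed.

Definition balls n d (z : seq nat) := \sum_(2 <= c < d.+1) comp n z c.

Definition weight n (z : seq nat) := \sum_(1 <= c < n.+2) comp n z c.

Lemma balls_Rtil1 n x y d : 1 <= d <= n.+1 ->
  balls n d (Rtil n x y).1 + Q n d x y = balls n d y + Q n 1 x y.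
Proof.
elim: d => [//|[|d] IH] le_dn; first by rewrite /balls !big_geq.
move: IH (Rtil1_comp n x y d.+2); rewrite /balls !(big_nat_recr d.+2 2) //=; lia.
Qed.

Lemma balls_Rtil2 n x y d : 1 <= d <= n.+1 ->
  balls n d (Rtil n x y).2 + Q n 1 x y = balls n d x + Q n d x y.
Proof.
elim: d => [//|[|d] IH] le_dn; first by rewrite /balls !big_geq.
move: IH (Rtil2_comp n x y d.+2); rewrite /balls !(big_nat_recr d.+2 2) //=; lia.
Qed.

Lemma balls_Rtil n x y d : 1 <= d <= n.+1 ->
  balls n d (Rtil n x y).1 + balls n d (Rtil n x y).2 = balls n d y + balls n d x.
Proof.
by move=> d_range; have := balls_Rtil1 n x y d d_range; have := balls_Rtil2 n x y d d_range; lia.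
Qed.

Lemma balls_le_weight n z : balls n n.+1 z <= weight n z.
Proof. by rewrite /weight big_ltn // leq_addl. Qed.

Lemma weight_sumn n z : size z = n.+1 -> weight n z = sumn z.
Proof.
move=> size_z; rewrite /weight big_add1 /= sumnE [RHS](big_nth 0) size_z.
by apply: eq_big_nat => c /andP[_ lt_cn]; rewrite compS.
Qed.

Lemma sum_window_weight n z i : \sum_(1 <= j < n.+2) comp n z (i + j) = weight n z.
Proof.
elim: i => [//|i <-].
rewrite -(sum_offsetS (comp n z) i 1 n.+2) big_nat_recr //= comp_wrap.
by rewrite [RHS]big_ltn // addn1 addnC.
Qed.

Lemma Q_le_weight n i x y : Q n i x y <= weight n y.
Proof.
rewrite -(sum_window_weight n y i) (leq_trans (Q_le_Qterm n i x y 1 _)) //.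
by rewrite Qterm_first leq_sum_nat_interval.
Qed.

Lemma Q_period n x y : Q n n.+1 x y = Q n 0 x y.
Proof.
have Qterm_period k : Qterm n n.+1 x y k = Qterm n 0 x y k.
  by rewrite /Qterm; congr (_ + _); apply: eq_big_nat => j _; rewrite addnC comp_addn_period.
by rewrite /Q Qterm_period (eq_map Qterm_period).
Qed.

Lemma Q0_balls n x y : balls n n.+1 y <= comp n x 1 -> Q n 0 x y = balls n n.+1 y.
Proof.
move=> le_yx; have Qterm1 : Qterm n 0 x y 1 = balls n n.+1 y by rewrite Qterm_first.
apply/eqP; rewrite eqn_leq -{1}Qterm1 Q_le_Qterm //=.
have [[|[|k]] // _ ->] := Q_attained n 0 x y; first by rewrite Qterm1.
by rewrite /Qterm big_ltn // -addnA (leq_trans le_yx) ?leq_addr.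
Qed.

Lemma Q1_le_balls n x y : Q n 1 x y <= balls n n.+1 x.
Proof.
rewrite (leq_trans (Q_le_Qterm n 1 x y n.+1 _)) ?leqnn //.
by rewrite Qterm_last -(sum_offsetS (comp n x) 0 1 n.+1).
Qed.

Lemma balls_Rtil_site n i x y : 1 <= i <= n.+1 -> balls n n.+1 y <= comp n x 1 ->
  balls n i y + balls n n.+1 (Rtil n x y).1 = balls n i (Rtil n x y).1 + Q n i x y.
Proof.
move=> i_range le_yx; have := balls_Rtil1 n x y i i_range.
have := balls_Rtil1 n x y n.+1 (leqnn _); rewrite Q_period Q0_balls //; lia.
Qed.

Lemma Rtil2_vacancy n x y : comp n x 1 - weight n y <= comp n (Rtil n x y).2 1.
Proof. by move: (Rtil2_comp n x y 1 isT) (Q_le_weight n 0 x y) => /=; lia. Qed.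

(** * [T_l] does not depend on [l] *)

Definition state_weight n (p : seq (seq nat)) := \sum_(y <- p) weight n y.

Lemma state_weight_cons n y p : state_weight n (y :: p) = weight n y + state_weight n p.
Proof. exact: big_cons. Qed.

Definition bump_head m (x : seq nat) := if x is a :: r then (a + m) :: r else x.

Lemma comp_bump_head n m x c :
  comp n (bump_head m x) c = comp n x c \/ comp n x c = comp n x 1.
Proof.
rewrite comp1 /comp; case: x => [|a r] /=; first by left.
by case: ((c + n) %% n.+1) => [|k] /=; [right | left].
Qed.

Lemma comp_bump_head_ge n m x c : comp n x c <= comp n (bump_head m x) c.
Proof.
rewrite /comp; case: x => [|a r] //=.
by case: ((c + n) %% n.+1) => [|k] //=; rewrite leq_addr.
Qed.

Lemma sum_eq_or_ge_value a b (F G : nat -> nat) v :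
  (forall j, G j = F j \/ F j = v) ->
  \sum_(a <= j < b) G j = \sum_(a <= j < b) F j \/ v <= \sum_(a <= j < b) F j.
Proof.
move=> GF; elim: b => [|b IH]; first by left; rewrite !big_geq.
have [le_ab|lt_ba] := leqP a b; last by left; rewrite !big_geq.
rewrite !big_nat_recr //; case: IH => [->|le_v]; last by right; rewrite (leq_trans le_v) ?leq_addr.
by case: (GF b) => [->|<-]; [left | right; rewrite leq_addl].
Qed.

Lemma Qterm_bump_head n m i x y k :
  Qterm n i (bump_head m x) y k = Qterm n i x y k \/ comp n x 1 <= Qterm n i x y k.
Proof.
rewrite /Qterm.
have [->|le_v] := sum_eq_or_ge_value 1 k _ _ _ (fun j => comp_bump_head n m x (i + j)).
  by left.
by right; rewrite (leq_trans le_v) ?leq_addr.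
Qed.

Lemma Qterm_bump_head_ge n m i x y k : Qterm n i x y k <= Qterm n i (bump_head m x) y k.
Proof. by rewrite leq_add2r; apply: leq_sum => j _; apply: comp_bump_head_ge. Qed.

Lemma Q_bump_head n m i x y : weight n y <= comp n x 1 -> Q n i (bump_head m x) y = Q n i x y.
Proof.
move=> le_yx; apply/eqP; rewrite eqn_leq; apply/andP; split.
  have [k k_range ->] := Q_attained n i x y.
  case: (Qterm_bump_head n m i x y k) => [<-|le_xk]; first exact: Q_le_Qterm.
  by rewrite (leq_trans (Q_le_weight n i _ y)) // (leq_trans le_yx).
have [k k_range ->] := Q_attained n i (bump_head m x) y.
by rewrite (leq_trans (Q_le_Qterm n i x y k k_range)) ?Qterm_bump_head_ge.
Qed.

Lemma Rtil2_cons n x y : (Rtil n x y).2 = comp n (Rtil n x y).2 1 :: behead (Rtil n x y).2.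
Proof. by rewrite comp1. Qed.

Lemma Rtil_bump_head n m a r y : weight n y <= a ->
  Rtil n ((a + m) :: r) y = ((Rtil n (a :: r) y).1, bump_head m (Rtil n (a :: r) y).2).
Proof.
move=> le_ya; have le_yx : weight n y <= comp n (a :: r) 1 by rewrite comp1.
have eqQ j : Q n j ((a + m) :: r) y = Q n j (a :: r) y := Q_bump_head n m j (a :: r) y le_yx.
rewrite /Rtil; congr (_, _); first by apply: eq_map => c; rewrite !eqQ.
rewrite /= !eqQ !comp1 /=; congr (_ :: _).
  by have := Q_le_weight n 0 (a :: r) y; lia.
apply/eq_in_map => c; rewrite mem_iota => c_range; rewrite !eqQ.
by case: c c_range => [|[|c]] // c_range; rewrite !compS.
Qed.

Lemma Tstep_cons n v y p :
  Tstep n v (y :: p) =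
  ((Rtil n v y).1 :: (Tstep n (Rtil n v y).2 p).1, (Tstep n (Rtil n v y).2 p).2).
Proof. by []. Qed.

Lemma Tstep_bump_head n m p a r : state_weight n p <= a ->
  Tstep n ((a + m) :: r) p = ((Tstep n (a :: r) p).1, bump_head m (Tstep n (a :: r) p).2).
Proof.
elim: p a r => [//|y p IH] a r; rewrite state_weight_cons => le_pa.
rewrite !Tstep_cons Rtil_bump_head; last lia.
have := Rtil2_vacancy n (a :: r) y; rewrite !comp1.
case: (Rtil n (a :: r) y).2 (Rtil2_cons n (a :: r) y) => [|a' r'] // _ /= vac.
by rewrite IH //; lia.
Qed.

Lemma T_stable n p l m : state_weight n p <= l -> T n (l + m) p = T n l p.
Proof. by move=> le_pl; rewrite /T /u_ Tstep_bump_head. Qed.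

Lemma Tinf_eq n p l : state_weight n p <= l -> Tinf n p = T n l p.
Proof.
move=> le_pl.
have T_eventually : exists r, exists L, forall l', L <= l' -> T n l' p = r.
  by exists (T n l p), l => l' /subnKC <-; rewrite T_stable.
have [L HL] := epsilon_spec (inhabits p) _ T_eventually.
by rewrite /Tinf -(HL (maxn l L)) ?leq_maxr // -(subnKC (leq_maxl l L)) T_stable.
Qed.

(** * Finiteness of the tail sum *)

Lemma colsum_cons n d y p : colsum n d (y :: p) = balls n d y + colsum n d p.
Proof. exact: big_cons. Qed.

Lemma balls_u n l : balls n n.+1 (u_ n l) = 0.
Proof.
rewrite /balls big_nat_cond big1 // => c /andP[/andP[c_ge2 lt_cn] _].
by case: c c_ge2 lt_cn => [|[|c]] // _ lt_cn; rewrite compS //= nth_nseq if_same.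
Qed.

Fixpoint ball_potential n (p : seq (seq nat)) : nat :=
  if p is y :: r then (size r).+1 * balls n n.+1 y + ball_potential n r else 0.

Lemma ball_potential_cons n y p :
  ball_potential n (y :: p) = (size p).+1 * balls n n.+1 y + ball_potential n p.
Proof. by []. Qed.

Lemma carriers_from_cons n v y p :
  carriers_from n v (y :: p) = v :: carriers_from n (Rtil n v y).2 p.
Proof. by []. Qed.

Lemma ball_potential_eq0 n p : (ball_potential n p == 0) = (colsum n n.+1 p == 0).
Proof.
elim: p => [|y p IH] /=; first by rewrite /colsum big_nil.
rewrite colsum_cons !addn_eq0 muln_eq0 IH.
by case: (balls n n.+1 y == 0); rewrite ?orbT.
Qed.

Lemma size_Tstep n v p : size (Tstep n v p).1 = size p.
Proof. by elim: p v => [|y p IH] v //=; rewrite IH. Qed.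

Lemma sum_carriers_from_ge n v p (F : seq nat -> nat) :
  F v <= \sum_(w <- carriers_from n v p) F w.
Proof. by case: p => [|y p]; rewrite big_cons leq_addr. Qed.

Lemma ball_potential_Tstep n v p :
  ball_potential n (Tstep n v p).1 + \sum_(w <- carriers_from n v p) balls n n.+1 w =
  ball_potential n p + (size p).+1 * balls n n.+1 v.
Proof.
elim: p v => [|y p IH] v; first by rewrite big_seq1 /= mul1n.
rewrite Tstep_cons !ball_potential_cons carriers_from_cons big_cons size_Tstep.
have := IH (Rtil n v y).2; have := congr1 (muln (size p).+1) (balls_Rtil n v y n.+1 (leqnn _)).
by rewrite !mulnDr [size _]/= (mulSn (size p).+1); lia.
Qed.

Lemma carried_balls_pos n v p :
  balls n n.+1 v = 0 -> state_weight n p <= comp n v 1 -> 0 < colsum n n.+1 p ->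
  0 < \sum_(w <- carriers_from n v p) balls n n.+1 w.
Proof.
elim: p v => [|y p IH] v no_balls; first by rewrite /colsum big_nil.
rewrite state_weight_cons colsum_cons carriers_from_cons big_cons no_balls add0n.
move=> le_yv p_balls.
have vac := Rtil2_vacancy n v y.
have := balls_Rtil n v y n.+1 (leqnn _); rewrite no_balls addn0.
have [y_empty|y_balls] := posnP (balls n n.+1 y) => conserved.
  by apply: IH; lia.
have := balls_Rtil2 n v y n.+1 (leqnn _).
rewrite Q_period Q0_balls ?no_balls; last by have := balls_le_weight n y; lia.
have := Q1_le_balls n v y; rewrite no_balls.
have := sum_carriers_from_ge n (Rtil n v y).2 p (balls n n.+1); lia.
Qed.

Lemma ball_potential_Tinf_le n p : ball_potential n (Tinf n p) <= ball_potential n p.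
Proof.
rewrite (Tinf_eq n p _ (leqnn _)) /T.
by have := ball_potential_Tstep n (u_ n (state_weight n p)) p; rewrite balls_u; lia.
Qed.

Lemma ball_potential_Tinf_lt n p :
  0 < colsum n n.+1 p -> ball_potential n (Tinf n p) < ball_potential n p.
Proof.
move=> p_balls; set l := state_weight n p.
have le_pl : state_weight n p <= comp n (u_ n l) 1 by rewrite comp1.
have := carried_balls_pos n (u_ n l) p (balls_u n l) le_pl p_balls.
have := ball_potential_Tstep n (u_ n l) p.
by rewrite (Tinf_eq n p l (leqnn _)) /T balls_u; lia.
Qed.

Lemma ball_potential_iter_Tinf n p t :
  ball_potential n (iter t (Tinf n) p) <= ball_potential n p - t.
Proof.
elim: t => [|t IH] /=; first by rewrite subn0.
have [no_balls|balls_left] := posnP (colsum n n.+1 (iter t (Tinf n) p)).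
  move/eqP: no_balls; rewrite -ball_potential_eq0 => /eqP no_potential.
  by have := ball_potential_Tinf_le n (iter t (Tinf n) p); rewrite no_potential; lia.
have := ball_potential_Tinf_lt n _ balls_left; lia.
Qed.

Lemma colsum_iter_Tinf_eventually0 n p :
  exists N, forall t, N <= t -> colsum n n.+1 (iter t (Tinf n) p) = 0.
Proof.
exists (ball_potential n p) => t le_pt; apply/eqP; rewrite -ball_potential_eq0.
by have := ball_potential_iter_Tinf n p t; lia.
Qed.

Lemma partial_tail_S n p N :
  partial_tail n p N.+1 = colsum n n.+1 (Tinf n p) + partial_tail n (Tinf n p) N.
Proof.
rewrite /partial_tail big_ltn // big_add1 /=.
by congr (_ + _); apply: eq_big_nat => t _; rewrite -iterS iterSr.
Qed.

Lemma tailsumE n p : exists N, forall M, N <= M -> partial_tail n p M = tailsum n p.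
Proof.
have [N vanish] := colsum_iter_Tinf_eventually0 n p.
have stable M : N <= M -> partial_tail n p M = partial_tail n p N.
  move=> le_NM; rewrite /partial_tail (big_cat_nat _ (n := N.+1)) //= ?ltnS //.
  rewrite [X in _ + X]big_nat_cond [X in _ + X]big1 ?addn0 // => t /andP[/andP[lt_Nt _] _].
  by apply: vanish; rewrite ltnW.
have tail_eventually : exists s, exists N, forall M, N <= M -> partial_tail n p M = s.
  by exists (partial_tail n p N), N.
exact: epsilon_spec (inhabits 0) _ tail_eventually.
Qed.

Lemma tailsum_Tinf n p : tailsum n p = colsum n n.+1 (Tinf n p) + tailsum n (Tinf n p).
Proof.
have [N1 tail_p] := tailsumE n p; have [N2 tail_Tp] := tailsumE n (Tinf n p).
rewrite -(tail_p (maxn N1 N2).+1) ?partial_tail_S ?tail_Tp // ?leq_maxr //.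
by rewrite ltnW // ltnS leq_maxl.
Qed.

(** * The telescoping identity *)

Lemma sum_nth_cons (F : seq nat -> seq nat -> nat) v vs y p :
  \sum_(0 <= j < size (y :: p)) F (nth [::] (v :: vs) j) (nth [::] (y :: p) j) =
  F v y + \sum_(0 <= j < size p) F (nth [::] vs j) (nth [::] p j).
Proof. exact: big_nat_recl. Qed.

Lemma colsum_Tstep n i v p : 1 <= i <= n.+1 -> state_weight n p <= comp n v 1 ->
  colsum n i p + colsum n n.+1 (Tstep n v p).1 =
  colsum n i (Tstep n v p).1 +
  \sum_(0 <= j < size p) Q n i (nth [::] (carriers_from n v p) j) (nth [::] p j).
Proof.
move=> i_range; elim: p v => [|y p IH] v; first by rewrite /colsum !big_nil.
rewrite state_weight_cons Tstep_cons !colsum_cons carriers_from_cons sum_nth_cons => le_pv.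
have := IH (Rtil n v y).2; have := Rtil2_vacancy n v y.
have := balls_Rtil_site n i v y i_range.
have := balls_le_weight n y; lia.
Qed.

Local Open Scope ring_scope.

Theorem lemma4p5 (n : nat) (q : seq (seq nat)) (i l : nat) :
  (1 <= n)%N ->
  is_state n q ->
  (1 <= i <= n.+1)%N ->
  (\sum_(x <- q) sumn x <= l)%N ->
  T n l q = Tinf n q ->
  (rho n i q)%:Z - (rho n i (Tinf n q))%:Z =
  (\sum_(0 <= j < size q) Q n i (nth [::] (carriers n l q) j) (nth [::] q j))%N%:Z.
Proof.
move=> _ q_state i_range le_ql T_l.
have le_wl : (state_weight n q <= comp n (u_ n l) 1)%N.
  rewrite comp1 (leq_trans _ le_ql) //; apply/eq_leq/eq_big_seq => y y_q.
  by apply: weight_sumn; case/andP: (allP q_state y y_q) => /eqP.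
have := colsum_Tstep n i (u_ n l) q i_range le_wl.
rewrite /rho tailsum_Tinf -T_l /T /carriers.
move: (\sum_(0 <= j < _) _)%N => S telescope.
by apply/eqP; rewrite subr_eq -PoszD; apply/eqP; congr Posz; lia.
Qed.
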